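(* Let $\mathsf{C}$ be a depth-$D$ Clifford circuit on $n$ qubits consisting only of one- and two-qubit Clifford unitaries, and let $F$ be local stochastic Pauli noise of strength $p$ on $\mathsf{C}$. Then there is local stochastic Pauli noise $F'$ on $\mathsf{C}$ of strength $$p'=D\cdot\big(2p^{2^{-(D-1)}}\big)^{1/D}$$ such that (i) $\mathrm{supp}(F')\subseteq\{D\}\times[n]$ and (ii) $F\bowtie\mathsf{C}=F'\bowtie\mathsf{C}$.
   Context: Wires of a depth-$D$ circuit on $n$ qubits: $\mathcal{W}_{\mathsf{C}}=[D]\times[n]$, with $(t,j)$ representing qubit $j$ after layer $t$. Local stochastic Pauli noise of strength $p$: a random function $F:\mathcal{W}_{\mathsf{C}}\to\mathcal{P}_1$ (single-qubit Paulis) with $\Pr[W\subseteq\mathrm{supp}(F)]\le p^{|W|}$ for all $W\subseteq\mathcal{W}_{\mathsf{C}}$, where $\mathrm{supp}(F)=\{w:F(w)\not\propto I\}$. $F\bowtie\mathsf{C}$ denotes the noisy execution in which $F(t,j)$ is applied to qubit $j$ right after layer $t$. *)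

From HB Require Import structures.
From mathcomp Require Import all_boot all_order all_algebra all_field.
From mathcomp Require Import all_classical all_reals all_analysis.
Set Implicit Arguments. Unset Strict Implicit. Unset Printing Implicit Defensive.
Import Order.TTheory GRing.Theory Num.Theory.
Local Open Scope ring_scope.

(* Computational basis states of k qubits. *)
Definition St (k : nat) := {ffun 'I_k -> bool}.
Definition Op (k : nat) := St k -> St k -> algC.

Definition opmul k (A B : Op k) : Op k := fun x y => \sum_(z : St k) A x z * B z y.
Definition opid k : Op k := fun x y => (x == y)%:R.
Arguments opid k : clear implicits.
Definition opadj k (A : Op k) : Op k := fun x y => (A y x)^*.
Definition opscale k (c : algC) (A : Op k) : Op k := fun x y => c * A x y.
Definition op_eq k (A B : Op k) : Prop := forall x y, A x y = B x y.

(* Single-qubit Paulis in symplectic form (x-bit, z-bit):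
   (false,false)=I, (true,false)=X, (true,true)=Y, (false,true)=Z. *)
Definition pauli1 := (bool * bool)%type.
Definition pauliI : pauli1 := (false, false).
Definition pauli1_mx (a : pauli1) : bool -> bool -> algC :=
  fun r c =>
  match a with
  | (false, false) => (r == c)%:R
  | (true, false) => (r != c)%:R
  | (true, true) => (r != c)%:R * (if r then 'i else - 'i)
  | (false, true) => (r == c)%:R * (if r then -1 else 1)
  end.

Definition pauli_op k (a : {ffun 'I_k -> pauli1}) : Op k :=
  fun x y => \prod_(i : 'I_k) pauli1_mx (a i) (x i) (y i).

Definition unitary k (U : Op k) : Prop := op_eq (opmul U (opadj U)) (opid k).

Definition clifford k (U : Op k) : Prop :=
  unitary U /\
  forall a : {ffun 'I_k -> pauli1}, exists (b : {ffun 'I_k -> pauli1}) (c : algC),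
    op_eq (opmul (opmul U (pauli_op a)) (opadj U)) (opscale c (pauli_op b)).

Record gate (n : nat) := Gate {
  g_k : nat;
  g_qubits : 'I_g_k -> 'I_n;
  g_U : Op g_k }.
Arguments g_k {n} g.
Arguments g_qubits {n} g _.
Arguments g_U {n} g _ _.

(* The n-qubit operator of a gate (tensor with identity elsewhere). *)
Definition embed n (g : gate n) : Op n :=
  fun x y =>
    g_U g [ffun i => x (g_qubits g i)] [ffun i => y (g_qubits g i)] *
    [forall l, (l \notin codom (g_qubits g)) ==> (x l == y l)]%:R.

Definition good_gate n (g : gate n) : Prop :=
  (g_k g = 1%N \/ g_k g = 2%N) /\ injective (g_qubits g) /\ clifford (g_U g).

Definition layer n := seq (gate n).

Definition disjoint_gates n (g h : gate n) : bool :=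
  [forall a, forall b, g_qubits g a != g_qubits h b].

Definition good_layer n (L : layer n) : Prop :=
  foldr (fun g P => good_gate g /\ P) True L /\ pairwise (@disjoint_gates n) L.

Definition layer_op n (L : layer n) : Op n := foldr (fun g U => opmul (embed g) U) (opid n) L.

(* A depth-D circuit on n qubits: layers indexed by t : 'I_D (t = 0 is the paper's layer 1). *)
Definition circuit n D := 'I_D -> layer n.

Definition clifford_circuit n D (C : circuit n D) : Prop := forall t, good_layer (C t).

Definition wire n D := ('I_D * 'I_n)%type.
Definition err n D := {ffun wire n D -> pauli1}.

Definition supp n D (f : err n D) : {set wire n D} := [set w | f w != pauliI].

(* Pauli error applied right after layer t. *)
Definition err_layer n D (f : err n D) (t : 'I_D) : Op n :=
  pauli_op [ffun j => f (t, j)].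

(* Noisy execution f ⋈ C: unitary E_{D} L_{D} ... E_1 L_1. *)
Definition noisy n D (C : circuit n D) (f : err n D) : Op n :=
  foldl (fun U t => opmul (opmul (err_layer f t) (layer_op (C t))) U) (opid n) (enum 'I_D).

Definition eq_up_to_phase k (A B : Op k) : Prop := exists c : algC, op_eq A (opscale c B).

Definition is_prob (R : realType) (Omega : finType) (P : Omega -> R) : Prop :=
  (forall w, 0 <= P w) /\ \sum_(w : Omega) P w = 1.

Definition local_stochastic (R : realType) (Omega : finType) (P : Omega -> R)
  n D (F : Omega -> err n D) (p : R) : Prop :=
  forall W : {set wire n D}, \sum_(w : Omega | W \subset supp (F w)) P w <= p ^+ #|W|.

Definition strength' (R : realType) (D : nat) (p : R) : R :=
  D%:R * powR (2 * powR p ((2 : R)^-1 ^+ D.-1)) (D%:R)^-1.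

From HB Require Import structures.
From mathcomp Require Import all_boot all_order all_algebra all_field.
From mathcomp Require Import all_classical all_reals all_analysis.
From mathcomp Require Import ring lra.
Import Order.TTheory GRing.Theory Num.Theory.
Local Open Scope ring_scope.
Set Implicit Arguments. Unset Strict Implicit. Unset Printing Implicit Defensive.

(* Conjugating a Pauli by a layer of disjoint one- and two-qubit Cliffords gives, up to a
   phase, a Pauli supported on the gate-neighbours of the original support.  Pushing all
   errors of F to the end of the circuit therefore gives an equivalent error F' on the last
   layer, where an error on a wire affects at most 2^(D-1) final qubits (its light cone) and
   each final qubit is affected by at most D 2^(D-1) wires.  If W is in supp F', choose for
   every w in W a source wire of F in its backward light cone: the chosen sources form a set
   of at least |W| / 2^(D-1) wires, so a union bound over these choices gives
   Pr[W in supp F'] <= (D 2^(D-1) q)^|W| with q = p^(2^-(D-1)), and D 2^(D-1) q <= p'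
   whenever p' < 1. *)

Section Operators.
Variable k : nat.
Implicit Types A B : Op k.

Lemma op_ext A B : op_eq A B -> A = B.
Proof. by move=> eqAB; apply: funext => x; apply: funext => y; apply: eqAB. Qed.

Lemma opmulA : associative (@opmul k).
Proof.
move=> A B C; apply: op_ext => x y; rewrite /opmul.
under eq_bigr => z _ do rewrite big_distrr /=.
rewrite exchange_big /=; apply: eq_bigr => w _.
by rewrite big_distrl /=; apply: eq_bigr => z _; rewrite mulrA.
Qed.

Lemma opmul1 : right_id (opid k) (@opmul k).
Proof.
move=> A; apply: op_ext => x y; rewrite /opmul /opid (bigD1 y) //= eqxx mulr1.
by rewrite big1 ?addr0 // => z /negbTE ->; rewrite mulr0.
Qed.

Lemma op1mul : left_id (opid k) (@opmul k).
Proof.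
move=> A; apply: op_ext => x y; rewrite /opmul /opid (bigD1 x) //= eqxx mul1r.
by rewrite big1 ?addr0 // => z; rewrite eq_sym => /negbTE ->; rewrite mul0r.
Qed.

Lemma opmulZl c A B : opmul (opscale c A) B = opscale c (opmul A B).
Proof.
apply: op_ext => x y; rewrite /opmul /opscale big_distrr.
by apply: eq_bigr => z _; rewrite /= mulrA.
Qed.

Lemma opmulZr c A B : opmul A (opscale c B) = opscale c (opmul A B).
Proof.
apply: op_ext => x y; rewrite /opmul /opscale big_distrr.
by apply: eq_bigr => z _; rewrite mulrCA.
Qed.

Lemma opscaleA c d A : opscale c (opscale d A) = opscale (c * d) A.
Proof. by apply: op_ext => x y; rewrite /opscale mulrA. Qed.

Lemma opscale1 A : opscale 1 A = A.
Proof. by apply: op_ext => x y; rewrite /opscale mul1r. Qed.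

Definition op_mx A : 'M[algC]_#|St k| := \matrix_(i, j) A (enum_val i) (enum_val j).

Lemma op_mx_mul A B : op_mx (opmul A B) = op_mx A *m op_mx B.
Proof.
apply/matrixP => i j; rewrite !mxE /opmul (reindex (@enum_val (St k) predT)) /=.
  by apply: eq_bigr => l _; rewrite !mxE.
exact/onW_bij/enum_val_bij.
Qed.

Lemma op_mx_id : op_mx (opid k) = 1%:M.
Proof. by apply/matrixP => i j; rewrite !mxE /opid (inj_eq enum_val_inj). Qed.

Lemma opmul_eq1C A B : opmul A B = opid k -> opmul B A = opid k.
Proof.
move=> AB1; have /mulmx1C : op_mx A *m op_mx B = 1%:M by rewrite -op_mx_mul AB1 op_mx_id.
rewrite -op_mx_mul -op_mx_id => /matrixP BA1; apply: op_ext => x y.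
by have := BA1 (enum_rank x) (enum_rank y); rewrite !mxE !enum_rankK.
Qed.

End Operators.

Section Paulis.
Variable k : nat.
Implicit Types (a b : {ffun 'I_k -> pauli1}) (x y : St k).

(* [pauli1_mx u r c] is nonzero only for [r = c (+) u.1], with this value. *)
Definition pauli1_phase (u : pauli1) (r : bool) : algC :=
  match u with
  | (true, true) => if r then 'i else - 'i
  | (false, true) => if r then -1 else 1
  | _ => 1
  end.

Lemma pauli1_mxE u r c : pauli1_mx u r c = (r == c (+) u.1)%:R * pauli1_phase u r.
Proof. by case: u => [[] []]; case: r; case: c; rewrite /= ?mulr1 ?mul1r ?mul0r. Qed.

Definition pauli_flip a x : St k := [ffun i => x i (+) (a i).1].
Definition pauli_phase a x : algC := \prod_i pauli1_phase (a i) (x i).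

Lemma pauli_flipK a : involutive (pauli_flip a).
Proof. by move=> x; apply/ffunP => i; rewrite !ffunE addbK. Qed.

Lemma pauli_flip_eq a x y : (x == pauli_flip a y) = (pauli_flip a x == y).
Proof. by apply/eqP/eqP => [->|<-]; rewrite pauli_flipK. Qed.

Lemma prod_ffun_eq x y : \prod_i ((x i == y i)%:R : algC) = (x == y)%:R.
Proof.
have [->|/eqP neq_xy] := eqVneq x y; first by rewrite big1 // => i _; rewrite eqxx.
have [i neq_i] : exists i, x i != y i.
  by apply/existsP; apply: contra_notT neq_xy => /existsPn eq_xy; apply/ffunP => i; apply/eqP/negPn.
by rewrite (bigD1 i) //= (negbTE neq_i) mul0r.
Qed.

Lemma pauli_opE a x y : pauli_op a x y = (x == pauli_flip a y)%:R * pauli_phase a x.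
Proof.
rewrite /pauli_op /pauli_phase -prod_ffun_eq -big_split /=.
by apply: eq_bigr => i _; rewrite pauli1_mxE ffunE.
Qed.

Lemma opmul_pauli_l a (A : Op k) x y :
  opmul (pauli_op a) A x y = pauli_phase a x * A (pauli_flip a x) y.
Proof.
rewrite /opmul (bigD1 (pauli_flip a x)) //= pauli_opE pauli_flip_eq eqxx mul1r.
rewrite big1 ?addr0 // => z neq_z.
by rewrite pauli_opE pauli_flip_eq eq_sym (negbTE neq_z) !mul0r.
Qed.

Lemma opmul_pauli_r a (A : Op k) x y :
  opmul A (pauli_op a) x y = A x (pauli_flip a y) * pauli_phase a (pauli_flip a y).
Proof.
rewrite /opmul (bigD1 (pauli_flip a y)) //= pauli_opE eqxx mul1r.
by rewrite big1 ?addr0 // => z neq_z; rewrite pauli_opE (negbTE neq_z) mul0r mulr0.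
Qed.

Definition pauli1_mul (u v : pauli1) : pauli1 := (u.1 (+) v.1, u.2 (+) v.2).
Definition pauli_mul a b : {ffun 'I_k -> pauli1} := [ffun i => pauli1_mul (a i) (b i)].

(* [pauli1_mul_phase u v] is the phase in sigma_u sigma_v = c sigma_(u v), e.g. X Z = -i Y. *)
Definition pauli1_mul_phase (u v : pauli1) : algC :=
  match u, v with
  | (false, true), (true, false) | (true, false), (true, true)
  | (true, true), (false, true) => 'i
  | (true, false), (false, true) | (true, true), (true, false)
  | (false, true), (true, true) => - 'i
  | _, _ => 1
  end.

Lemma pauli1_phaseM u v r :
  pauli1_phase u r * pauli1_phase v (r (+) u.1) =
  pauli1_mul_phase u v * pauli1_phase (pauli1_mul u v) r.
Proof.
by case: u => [[] []]; case: v => [[] []]; case: r;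
  rewrite /= ?mulr1 ?mul1r ?mulN1r ?mulrN1 ?mulNr ?mulrN ?opprK ?mulCii ?opprK.
Qed.

Lemma pauli_flipM a b y : pauli_flip a (pauli_flip b y) = pauli_flip (pauli_mul a b) y.
Proof. by apply/ffunP => i; rewrite !ffunE /= addbA addbAC. Qed.

Lemma pauli_opM a b :
  opmul (pauli_op a) (pauli_op b) =
  opscale (\prod_i pauli1_mul_phase (a i) (b i)) (pauli_op (pauli_mul a b)).
Proof.
apply: op_ext => x y; rewrite opmul_pauli_l /opscale !pauli_opE.
rewrite [LHS]mulrC -mulrA [RHS]mulrCA; congr (_ * _).
  by rewrite -pauli_flipM [in RHS]pauli_flip_eq.
rewrite /pauli_phase -!big_split /=; apply: eq_bigr => i _.
by rewrite mulrC ffunE pauli1_phaseM ffunE.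
Qed.

Lemma pauli_op1 : pauli_op [ffun _ => pauliI] = opid k.
Proof.
apply: op_ext => x y; rewrite pauli_opE /opid /pauli_phase big1 ?mulr1 => [|i _]; last by rewrite ffunE.
by congr ((_ == _)%:R); apply/ffunP => i; rewrite !ffunE addbF.
Qed.

End Paulis.

Lemma clifford_pauli_commute k (U : Op k) a : clifford U ->
  exists b c, opmul U (pauli_op a) = opscale c (opmul (pauli_op b) U) /\
    ((forall u, a u = pauliI) -> forall u, b u = pauliI).
Proof.
case=> unitU conjU.
have [a_id|/forallPn[u0 /negP a_u0]] := boolP [forall u, a u == pauliI].
  have -> : a = [ffun _ => pauliI] by apply/ffunP => u; rewrite ffunE; apply/eqP/(forallP a_id).
  by exists [ffun _ => pauliI], 1; rewrite pauli_op1 opmul1 op1mul opscale1.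
have [b [c /op_ext conjUa]] := conjU a; exists b, c; split=> [|a_id]; last by case: a_u0; rewrite a_id.
have adjUU : opmul (opadj U) U = opid k by apply/opmul_eq1C/op_ext.
by rewrite -[LHS]opmul1 -adjUU opmulA conjUa opmulZl.
Qed.

Section Gates.
Variables (n : nat) (g : gate n).
Hypothesis inj_g : injective (g_qubits g).
Local Notation q := (g_qubits g).

Definition on_gate (j : 'I_n) : bool := j \in codom q.

Definition pauli_extend (b : {ffun 'I_(g_k g) -> pauli1}) (a : {ffun 'I_n -> pauli1}) :
  {ffun 'I_n -> pauli1} :=
  [ffun j => if [pick u | q u == j] is Some u then b u else a j].

Lemma pauli_extend_on b a u : pauli_extend b a (q u) = b u.
Proof. by rewrite ffunE; case: pickP => [v /eqP/inj_g -> //|/(_ u)]; rewrite eqxx. Qed.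

Lemma pauli_extend_off b a j : ~~ on_gate j -> pauli_extend b a j = a j.
Proof.
move=> off_j; rewrite ffunE; case: pickP => // u /eqP qu_j.
by rewrite -qu_j /on_gate codom_f in off_j.
Qed.

Lemma prod_on_gate (h : 'I_n -> algC) :
  \prod_l h l = (\prod_u h (q u)) * \prod_(l | ~~ on_gate l) h l.
Proof.
rewrite (bigID on_gate) /=; congr (_ * _).
rewrite (eq_bigl (mem [set q u | u : 'I_(g_k g)])) => [|l]; last first.
  by rewrite /on_gate; apply/codomP/imsetP => [[u ->]|[u _ ->]]; exists u.
by rewrite big_imset //= => u v _ _ /inj_g.
Qed.

Lemma embed_pauli_commute (a : {ffun 'I_n -> pauli1}) (b' : {ffun 'I_(g_k g) -> pauli1}) c :
  opmul (g_U g) (pauli_op [ffun u => a (q u)]) = opscale c (opmul (pauli_op b') (g_U g)) ->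
  opmul (embed g) (pauli_op a) = opscale c (opmul (pauli_op (pauli_extend b' a)) (embed g)).
Proof.
set a' := [ffun u => a (q u)]; set b := pauli_extend b' a => conjU.
apply: op_ext => x y; rewrite /opscale opmul_pauli_r opmul_pauli_l /embed.
set rx := [ffun i => x (q i)]; set ry := [ffun i => y (q i)].
have := congr1 (fun M => M rx ry) conjU; rewrite /= /opscale opmul_pauli_r opmul_pauli_l => conjU_xy.
have restr_a : [ffun i => pauli_flip a y (q i)] = pauli_flip a' ry.
  by apply/ffunP => u; rewrite !ffunE.
have restr_b : [ffun i => pauli_flip b x (q i)] = pauli_flip b' rx.
  by apply/ffunP => u; have := pauli_extend_on b' a u; rewrite !ffunE => ->.
rewrite restr_a restr_b.
have off_a_b l : ~~ on_gate l -> (x l == pauli_flip a y l) = (pauli_flip b x l == y l).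
  move=> off_l; have := pauli_extend_off b' a off_l; rewrite !ffunE => ->.
  by case: (x l); case: (y l); case: (a l).1.
rewrite (eq_forallb (fun l => implyb_id2l (off_a_b l))) -/(on_gate _).
case: forallP => [off_eq|]; last by rewrite !mulr0 mul0r.
have phase_off : \prod_(l | ~~ on_gate l) pauli1_phase (a l) (pauli_flip a y l) =
                 \prod_(l | ~~ on_gate l) pauli1_phase (b l) (x l).
  apply: eq_bigr => l off_l; rewrite pauli_extend_off //.
  by have := off_eq l; rewrite off_l -off_a_b // => /eqP ->.
rewrite /pauli_phase !(prod_on_gate (fun l => pauli1_phase _ _)) -phase_off.
have -> : \prod_u pauli1_phase (a (q u)) (pauli_flip a y (q u)) = pauli_phase a' (pauli_flip a' ry).
  by apply: eq_bigr => u _; rewrite -restr_a !ffunE.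
have -> : \prod_u pauli1_phase (b (q u)) (x (q u)) = pauli_phase b' rx.
  by apply: eq_bigr => u _; rewrite pauli_extend_on ffunE.
by rewrite mulr1 mulrA conjU_xy mulr1; ring.
Qed.

End Gates.

Section Layers.
Variable n : nat.
Implicit Types (g : gate n) (L : layer n).

Definition layer_nbr L : rel 'I_n :=
  fun k j => (k == j) || has (fun g => on_gate g k && on_gate g j) L.

Lemma layer_nbr_sym L : symmetric (layer_nbr L).
Proof. by move=> k j; rewrite /layer_nbr eq_sym; congr orb; apply: eq_has => g; rewrite andbC. Qed.

Lemma good_layer_cons g L :
  good_layer (g :: L) -> [/\ good_gate g, all (disjoint_gates g) L & good_layer L].
Proof. by case=> -[good_g good_L] /= /andP[disj_g pw_L]. Qed.

Lemma disjoint_gates_on g L k j : all (disjoint_gates g) L -> on_gate g k ->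
  ~~ has (fun h => on_gate h k && on_gate h j) L.
Proof.
move=> + /codomP[u ->]; elim: L => //= h L IH /andP[/forallP/(_ u)/forallP disj_gh /IH].
rewrite negb_or => ->; rewrite andbT; apply/nandP; left; apply/codomP => -[v hv].
by have := disj_gh v; rewrite hv eqxx.
Qed.

Lemma layer_pauli_commute L a : good_layer L -> exists b c,
  opmul (layer_op L) (pauli_op a) = opscale c (opmul (pauli_op b) (layer_op L)) /\
  forall j, b j != pauliI -> exists2 k, layer_nbr L k j & a k != pauliI.
Proof.
elim: L => [|g L IH] good_L.
  exists a, 1; rewrite /layer_op /= opmul1 op1mul opscale1; split=> // j a_j.
  by exists j; rewrite /layer_nbr ?eqxx.
have [[_ [inj_g cliff_g]] disj_g /IH[b1 [c1 [comm_L supp_b1]]]] := good_layer_cons good_L.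
have [b' [c2 [comm_g supp_b']]] := clifford_pauli_commute [ffun u => b1 (g_qubits g u)] cliff_g.
exists (pauli_extend b' b1), (c1 * c2); split.
  rewrite /layer_op /= -/(layer_op L) -opmulA comm_L opmulZr opmulA.
  by rewrite (embed_pauli_commute inj_g comm_g) opmulZl opscaleA -opmulA.
move=> j; have [/codomP[u ->]|off_j] := boolP (on_gate g j); last first.
  rewrite pauli_extend_off // => /supp_b1[k nbr_kj b1_k]; exists k => //.
  by move: nbr_kj; rewrite /layer_nbr /= (negbTE off_j) andbF.
rewrite pauli_extend_on // => b'_u.
have [/forallP b1_id|/forallPn[v b1_v]] := boolP [forall v, b1 (g_qubits g v) == pauliI].
  by case/negP: b'_u; apply/eqP/supp_b' => v; rewrite ffunE; apply/eqP/b1_id.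
have [k nbr_k b1_k] := supp_b1 _ b1_v; exists k => //.
have k_on : k = g_qubits g v.
  rewrite layer_nbr_sym in nbr_k; case/orP: nbr_k => [/eqP //|].
  by rewrite (negbTE (disjoint_gates_on _ disj_g (codom_f _ v))).
by rewrite /layer_nbr /= /on_gate k_on !codom_f orbT.
Qed.

End Layers.

Lemma foldl_map (T1 T2 R : Type) (f : R -> T2 -> R) (h : T1 -> T2) z s :
  foldl f z (map h s) = foldl (fun z x => f z (h x)) z s.
Proof. by elim: s z => //= x s IH z; rewrite IH. Qed.

Lemma card_cover_leq (T T' : finType) (S : {pred T}) (B : {pred T'}) (R : T -> T' -> bool) M :
  (forall i, i \in S -> exists2 k, k \in B & R i k) ->
  (forall k, k \in B -> (#|[set i | R i k]| <= M)%N) ->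
  (#|S| <= #|B| * M)%N.
Proof.
move=> cover fibre_le; rewrite -sum1_card.
apply: (@leq_trans (\sum_(i in S) \sum_(k in B) R i k)).
  by apply: leq_sum => i /cover[k B_k R_ik]; rewrite (bigD1 k) //= R_ik leq_addr.
apply: (@leq_trans (\sum_i \sum_(k in B) R i k)); first by rewrite [leqRHS](bigID (mem S)) leq_addr.
rewrite exchange_big -sum_nat_const; apply: leq_sum => k B_k.
by apply: leq_trans (fibre_le k B_k); rewrite -big_mkcond sum1_card; apply/eq_leq/eq_card => i; rewrite inE.
Qed.

Section Reach.
Variables (T : finType) (E : nat -> rel T).

Fixpoint reach (s m : nat) (i j : T) : bool :=
  if m is m'.+1 then [exists k, reach s m' i k && E (s + m') k j] else i == j.

Variable d : nat.
Hypothesis out_deg : forall m i, (#|[set j | E m i j]| <= d)%N.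
Hypothesis in_deg : forall m j, (#|[set i | E m i j]| <= d)%N.

Lemma reach_out_card s m i : (#|[set j | reach s m i j]| <= d ^ m)%N.
Proof.
elim: m => [|m IH] /=.
  by rewrite (eq_card (B := pred1 i)) ?card1 // => j; rewrite inE eq_sym.
rewrite expnSr; apply: leq_trans (leq_mul IH (leqnn d)).
apply: (card_cover_leq (R := fun j k => E (s + m) k j)) => [j|k _].
  by rewrite inE => /existsP[k /andP[r_ik E_kj]]; exists k; rewrite ?inE.
by apply: leq_trans (out_deg _ k); apply/eq_leq/eq_card => j; rewrite !inE.
Qed.

Lemma reach_in_card s m j : (#|[set i | reach s m i j]| <= d ^ m)%N.
Proof.
elim: m j => [|m IH] j /=.
  by rewrite (eq_card (B := pred1 j)) ?card1 // => i; rewrite inE.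
rewrite expnS; apply: leq_trans (leq_mul (in_deg (s + m) j) (leqnn _)).
apply: (card_cover_leq (R := reach s m)) => [i|k _]; last exact: IH.
by rewrite inE => /existsP[k /andP[r_ik E_kj]]; exists k; rewrite ?inE.
Qed.

End Reach.

Lemma layer_nbr_card n (L : layer n) k : good_layer L -> (#|[set j | layer_nbr L k j]| <= 2)%N.
Proof.
elim: L => [|g L IH] good_L.
  by rewrite (eq_card (B := pred1 k)) ?card1 // => j; rewrite !inE /layer_nbr orbF eq_sym.
have [[size_g [inj_g _]] disj_g good_L'] := good_layer_cons good_L.
have [on_k|off_k] := boolP (on_gate g k); last first.
  by apply: leq_trans (IH good_L'); apply/subset_leq_card/fintype.subsetP => j; rewrite !inE /layer_nbr /= (negbTE off_k).
apply: (@leq_trans #|codom (g_qubits g)|); last by rewrite card_codom // card_ord; case: size_g => ->.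
apply/subset_leq_card/fintype.subsetP => j; rewrite !inE /layer_nbr /= => /orP[/eqP <- //|/orP[/andP[_ //]|has_kj]].
by move: has_kj; rewrite (negbTE (disjoint_gates_on _ disj_g on_k)).
Qed.

Section Circuit.
Variables (n D : nat) (C : circuit n D).
Implicit Types f : err n D.

Definition layer_at (m : nat) : layer n := if insub m is Some t then C t else [::].

Definition errs_at f (m : nat) : {ffun 'I_n -> pauli1} :=
  [ffun j => if insub m is Some t then f (t, j) else pauliI].

Definition noisy_upto f (m : nat) : Op n :=
  foldl (fun U m => opmul (opmul (pauli_op (errs_at f m)) (layer_op (layer_at m))) U)
    (opid n) (iota 0 m).

Definition err0 : err n D := [ffun _ => pauliI].

Definition circuit_nbr (m : nat) : rel 'I_n := layer_nbr (layer_at m).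

Definition final_wire (w : wire n D) : bool := (val w.1).+1 == D.

Definition spreads_to (s w : wire n D) : bool :=
  final_wire w && reach circuit_nbr s.1.+1 (D - s.1.+1) s.2 w.2.

Lemma errs_at_err0 m : errs_at err0 m = [ffun _ => pauliI].
Proof. by apply/ffunP => j; rewrite !ffunE; case: insubP => // t _ _; rewrite ffunE. Qed.

Lemma noisy_uptoS f m :
  noisy_upto f m.+1 = opmul (opmul (pauli_op (errs_at f m)) (layer_op (layer_at m))) (noisy_upto f m).
Proof. by rewrite /noisy_upto -addn1 iotaD foldl_cat. Qed.

Lemma eq_noisy_upto f f' m : (forall m', (m' < m)%N -> errs_at f m' = errs_at f' m') ->
  noisy_upto f m = noisy_upto f' m.
Proof.
elim: m => // m IH eq_errs; rewrite !noisy_uptoS eq_errs // IH // => m' lt_m'm.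
by apply: eq_errs; rewrite ltnS ltnW.
Qed.

Lemma noisy_noisy_upto f : noisy C f = noisy_upto f D.
Proof.
rewrite /noisy_upto -val_enum_ord foldl_map /noisy; congr foldl.
apply: funext => U; apply: funext => t; rewrite /layer_at /errs_at valK /err_layer.
by congr (opmul (opmul (pauli_op _) _) _); apply/ffunP => j; rewrite !ffunE valK.
Qed.

Hypothesis HC : clifford_circuit C.

Lemma good_layer_at m : good_layer (layer_at m).
Proof. by rewrite /layer_at; case: insubP. Qed.

Lemma noisy_upto_push f m : exists b c,
  noisy_upto f m = opscale c (opmul (pauli_op b) (noisy_upto err0 m)) /\
  forall j, b j != pauliI -> exists2 s : wire n D, f s != pauliI &
    (s.1 < m)%N && reach circuit_nbr s.1.+1 (m - s.1.+1) s.2 j.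
Proof.
elim: m => [|m [b [c [eq_m supp_b]]]].
  exists [ffun _ => pauliI], 1; rewrite /noisy_upto /= pauli_op1 op1mul opscale1.
  by split=> // j; rewrite ffunE eqxx.
have [b2 [c2 [comm_L supp_b2]]] := layer_pauli_commute b (good_layer_at m).
set e := errs_at f m; set L := layer_op (layer_at m).
exists (pauli_mul e b2), (c * (c2 * \prod_i pauli1_mul_phase (e i) (b2 i))); split.
  have comm_step : opmul (opmul (pauli_op e) L) (pauli_op b) =
      opscale (c2 * \prod_i pauli1_mul_phase (e i) (b2 i)) (opmul (pauli_op (pauli_mul e b2)) L).
    by rewrite -opmulA comm_L opmulZr opmulA pauli_opM opmulZl opscaleA.
  rewrite !noisy_uptoS eq_m errs_at_err0 pauli_op1 op1mul opmulZr opmulA comm_step.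
  by rewrite opmulZl opscaleA -opmulA.
move=> j; rewrite ffunE => eb2_j; have [e_j|/negbNE/eqP e_j] := boolP (e j != pauliI).
  move: e_j; rewrite ffunE; case: insubP => [t _ val_t f_tj|//].
  by exists (t, j); rewrite //= val_t ltnSn subnn /=.
have b2_j : b2 j != pauliI by move: eb2_j; rewrite e_j; case: (b2 j) => [[] []].
have [k nbr_kj b_k] := supp_b2 j b2_j; have [s f_s /andP[s_m reach_sk]] := supp_b k b_k.
exists s; rewrite // ltnS ltnW // (subSn s_m) /=.
by apply/existsP; exists k; rewrite reach_sk (subnKC s_m).
Qed.

Lemma push_errors_to_end f : exists2 f' : err n D,
  eq_up_to_phase (noisy C f) (noisy C f') &
  forall w, w \in supp f' -> exists2 s, s \in supp f & spreads_to s w.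
Proof.
have [D0|D_gt0] := posnP D.
  exists f => [|[t j]]; first by exists 1 => x y; rewrite /opscale mul1r.
  by move: (leq_trans (ltn_ord t) (eq_leq D0)); rewrite ltn0.
have [b [c [eq_D supp_b]]] := noisy_upto_push f D.
pose f' : err n D := [ffun w => if final_wire w then b w.2 else pauliI].
exists f' => [|w]; last first.
  rewrite inE ffunE; case: ifP => [final_w b_w|_]; last by rewrite eqxx.
  have [s f_s /andP[_ reach_s]] := supp_b _ b_w.
  by exists s; rewrite ?inE /spreads_to ?final_w.
exists c => x y; rewrite !noisy_noisy_upto eq_D -(prednK D_gt0) !noisy_uptoS.
have -> : errs_at f' D.-1 = b.
  apply/ffunP => j; rewrite !ffunE; case: insubP => [t _ val_t|]; last by rewrite ltn_predL D_gt0.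
  by rewrite ffunE /final_wire /= val_t prednK ?eqxx.
rewrite (@eq_noisy_upto f' err0) => [|m lt_m]; last first.
  apply/ffunP => j; rewrite !ffunE; case: insubP => // t _ val_t.
  by rewrite !ffunE /final_wire /= val_t ltn_eqF // (leq_ltn_trans lt_m) ?ltn_predL.
by rewrite errs_at_err0 pauli_op1 op1mul opmulA.
Qed.

Lemma circuit_nbr_out_card m k : (#|[set j | circuit_nbr m k j]| <= 2)%N.
Proof. exact: layer_nbr_card (good_layer_at m). Qed.

Lemma circuit_nbr_in_card m j : (#|[set k | circuit_nbr m k j]| <= 2)%N.
Proof.
rewrite (eq_card (B := [set k | circuit_nbr m j k])) ?circuit_nbr_out_card // => k.
by rewrite !inE /circuit_nbr layer_nbr_sym.
Qed.

Lemma cone_depth_le (t : 'I_D) : (2 ^ (D - t.+1) <= 2 ^ D.-1)%N.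
Proof. by rewrite leq_pexp2l // -subn1 leq_sub2l. Qed.

Lemma spreads_to_sources_card w : (#|[set s | spreads_to s w]| <= D * 2 ^ D.-1)%N.
Proof.
rewrite -[X in (X * _)%N](card_ord D).
apply: (card_cover_leq (B := predT) (R := fun s t => (s.1 == t) && spreads_to s w)) => [s|t _].
  by rewrite inE => spread_sw; exists s.1; rewrite ?eqxx.
apply: leq_trans (cone_depth_le t); apply: leq_trans (reach_in_card circuit_nbr_in_card t.+1 (D - t.+1) w.2).
apply: leq_trans (leq_imset_card (fun i => (t, i)) _); apply/subset_leq_card/fintype.subsetP.
move=> [t' i]; rewrite !inE /= => /andP[/eqP -> /andP[_ reach_iw]].
by apply/imsetP; exists i; rewrite ?inE.
Qed.

Lemma spreads_to_targets_card s : (#|[set w | spreads_to s w]| <= 2 ^ D.-1)%N.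
Proof.
have inj_snd : {in [set w | spreads_to s w] &, injective (fun w : wire n D => w.2)}.
  move=> [t1 j1] [t2 j2]; rewrite !inE => /andP[/eqP D1 _] /andP[/eqP D2 _] /= ->.
  by congr pair; apply/val_inj/succn_inj; rewrite D1 D2.
rewrite -(card_in_imset inj_snd); apply: leq_trans (cone_depth_le s.1).
apply: leq_trans (reach_out_card circuit_nbr_out_card s.1.+1 (D - s.1.+1) s.2); apply/subset_leq_card/fintype.subsetP.
by move=> j /imsetP[w]; rewrite !inE => /andP[_ reach_sw] ->.
Qed.

End Circuit.

Section SpreadingNoise.
Variables (R : realType) (Omega : finType) (P : Omega -> R).
Hypothesis HP : is_prob P.

Lemma prob_le1 (A : pred Omega) : \sum_(om | A om) P om <= 1.
Proof.
case: HP => P_ge0 <-; rewrite [leRHS](bigID A) /= lerDl.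
by apply: sumr_ge0 => om _; apply: P_ge0.
Qed.

Lemma prob_indicator (A : pred Omega) : \sum_(om | A om) P om = \sum_om P om * (A om)%:R.
Proof. by rewrite big_mkcond; apply: eq_bigr => om _; case: (A om); rewrite ?mulr1 ?mulr0. Qed.

Variables (T : finType) (Fs Gs : Omega -> {set T}) (spread : rel T) (p q : R) (B K : nat).
Hypothesis HF : forall W : {set T}, \sum_(om | W \subset Fs om) P om <= p ^+ #|W|.
Hypothesis Gs_spread : forall om w, w \in Gs om -> exists2 s, s \in Fs om & spread s w.
Hypothesis sources_le : forall w, (#|[set s | spread s w]| <= B)%N.
Hypothesis targets_le : forall s, (#|[set w | spread s w]| <= K)%N.
Hypotheses (q_ge0 : 0 <= q) (q_le1 : q <= 1) (qK : q ^+ K = p).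

Lemma prod_mem_imset (f : T -> T) (W A : {set T}) :
  \prod_(w in W) ((f w \in A)%:R : R) = (f @: W \subset A)%:R.
Proof.
have [sub_fW|/fintype.subsetPn[_ /imsetP[w W_w ->] fw_A]] := boolP (f @: W \subset A).
  by rewrite big1 // => w W_w; rewrite (fintype.subsetP sub_fW) ?imset_f.
by rewrite (bigD1 w) //= (negbTE fw_A) mul0r.
Qed.

Lemma prob_subset_le_sources om (W : {set T}) :
  ((W \subset Gs om)%:R : R) <= \prod_(w in W) \sum_(s | spread s w) ((s \in Fs om)%:R : R).
Proof.
have [/fintype.subsetP W_Gs|_] := boolP (W \subset Gs om); last first.
  by apply: prodr_ge0 => w _; apply: sumr_ge0.
apply: (big_ind (fun x : R => 1 <= x)) => // [x y|w /W_Gs/Gs_spread[s Fs_s spread_sw]].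
  exact: mulr_ege1.
by rewrite (bigD1 s) //= Fs_s lerDl; apply: sumr_ge0.
Qed.

Lemma prob_image_subset_le (f : T -> T) (W : {set T}) : {in W, forall w, spread (f w) w} ->
  \sum_(om | f @: W \subset Fs om) P om <= q ^+ #|W|.
Proof.
move=> spread_f; apply: le_trans (HF _) _; rewrite -qK -exprM.
apply: ler_wiXn2l => //; rewrite mulnC.
apply: (card_cover_leq (B := mem (f @: W)) (R := fun w s => spread s w)) => [w W_w|s _].
  by exists (f w); [rewrite imset_f | apply: spread_f].
exact: targets_le.
Qed.

Lemma prob_spread_le (W : {set T}) : \sum_(om | W \subset Gs om) P om <= (B%:R * q) ^+ #|W|.
Proof.
have [->|[s0 _]] := set_0Vmem W; first by rewrite cards0 expr0 prob_le1.
case: (HP) => P_ge0 _; rewrite prob_indicator.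
apply: le_trans (ler_sum _ (fun om _ => ler_wpM2l (P_ge0 om) (prob_subset_le_sources om W))) _.
under eq_bigr => om _ do rewrite (big_distr_big_dep s0) big_distrr /=.
rewrite exchange_big /=; set PF := pfamily _ _ _.
apply: (@le_trans _ _ (\sum_(f in PF) q ^+ #|W|)).
  apply: ler_sum => f /pfamilyP[_ spread_f].
  under eq_bigr => om _ do rewrite prod_mem_imset.
  by rewrite -prob_indicator prob_image_subset_le.
rewrite sumr_const -(mulr_natl (q ^+ #|W|)) exprMn -natrX; apply: ler_wpM2r; rewrite ?exprn_ge0 // ler_nat.
rewrite card_pfamily foldrE big_map big_enum /= -prod_nat_const.
by apply: leq_prod => w _; rewrite (eq_card (B := [set s | spread s w])) // => s; rewrite inE.
Qed.

End SpreadingNoise.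

Section Strength.
Variable R : realType.
Implicit Types p : R.

Lemma powR_halves_expn D p : 0 <= p ->
  powR p ((2 : R)^-1 ^+ D.-1) ^+ (2 ^ D.-1)%N = p.
Proof. by move=> p_ge0; rewrite -powR_mulrn ?powR_ge0 // -powRrM natrX exprVn mulVf ?powRr1. Qed.

Lemma strength'_ge0 D p : 0 <= strength' D p.
Proof. by rewrite mulr_ge0 ?ler0n ?powR_ge0. Qed.

Lemma strength'_bound D p : 0 <= p -> (0 < D)%N -> strength' D p < 1 ->
  (D * 2 ^ D.-1)%N%:R * powR p ((2 : R)^-1 ^+ D.-1) <= strength' D p /\
  powR p ((2 : R)^-1 ^+ D.-1) <= 1.
Proof.
case: D => [//|D] p_ge0 _; rewrite /strength' /=.
set q := powR p _; set y := powR (2 * q) _ => Dy_lt1.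
have q_ge0 : 0 <= q by apply: powR_ge0.
have y_ge0 : 0 <= y by apply: powR_ge0.
have q_eq : q = y * y ^+ D / 2.
  rewrite -exprS -powR_mulrn ?powR_ge0 // -powRrM mulVf ?powRr1 ?pnatr_eq0 //; first by field.
  by rewrite mulr_ge0.
have two_y_le1 : (2 * y) ^+ D <= 1.
  have [->|D_gt0] := posnP D; first by rewrite expr0.
  apply: exprn_ile1; first by rewrite mulr_ge0.
  have : 2 * y <= D.+1%:R * y by apply: ler_wpM2r; rewrite // ler_nat ltnS.
  lra.
have B_q_le : (D.+1 * 2 ^ D)%N%:R * q <= D.+1%:R * y.
  have -> : (D.+1 * 2 ^ D)%N%:R * q = D.+1%:R * y * ((2 * y) ^+ D / 2).
    by rewrite q_eq natrM natrX exprMn; field.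
  rewrite -[leRHS]mulr1 ler_wpM2l ?mulr_ge0 ?ler0n //; lra.
split=> //.
have : q <= (D.+1 * 2 ^ D)%N%:R * q by apply: ler_peMl; rewrite // ler1n muln_gt0 expn_gt0.
lra.
Qed.

End Strength.

Theorem lemma5p1p2 (R : realType) (n D : nat) (C : circuit n D)
  (HC : clifford_circuit C)
  (Omega : finType) (P : Omega -> R) (HP : is_prob P)
  (F : Omega -> err n D) (p : R) (hp : 0 <= p)
  (HF : local_stochastic P F p) :
  exists F' : Omega -> err n D,
    local_stochastic P F' (strength' D p) /\
    (forall (om : Omega) (w : wire n D), w \in supp (F' om) -> (val w.1).+1 = D) /\
    (forall om : Omega, eq_up_to_phase (noisy C (F om)) (noisy C (F' om))).
Proof.
have /choice[G push_F] om : exists G_om, eq_up_to_phase (noisy C (F om)) (noisy C G_om) /\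
    forall w, w \in supp G_om -> exists2 s, s \in supp (F om) & spreads_to C s w.
  by have [G_om ? ?] := push_errors_to_end HC (F om); exists G_om.
have G_spread om := (push_F om).2.
exists G; split; last split; last by move=> om; case: (push_F om).
  move=> W; have [->|[w0 _]] := set_0Vmem W; first by rewrite cards0 expr0 prob_le1.
  have D_gt0 : (0 < D)%N := leq_ltn_trans (leq0n _) (ltn_ord w0.1).
  have [p'_ge1|p'_lt1] := lerP 1 (strength' D p).
    exact: le_trans (prob_le1 HP _) (exprn_ege1 _ p'_ge1).
  have [B_q_le q_le1] := strength'_bound hp D_gt0 p'_lt1.
  apply: le_trans (prob_spread_le HP HF G_spread (spreads_to_sources_card HC)
    (spreads_to_targets_card HC) (powR_ge0 _ _) q_le1 (powR_halves_expn _ hp) W) _.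
  by apply: lerXn2r; rewrite ?nnegrE ?strength'_ge0 ?mulr_ge0 ?powR_ge0.
by move=> om w /G_spread[s _ /andP[/eqP]].
Qed.
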